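(* For points $P=(x,y)$, $Q=(x',y')$ in $\mathbb{R}^2$ with $xx'+yy'\leq 1$ define $\delta(P,Q)=\sqrt{2-2xx'-2yy'}$. Let $A_1=(0,-1)$ and let $B_1=(x_1,y_1)$, $C_1=(x_2,y_2)$, $D_1=(x_3,y_3)\in[-1,1]\times[-1,1]$ satisfy: (i) $x_1^2+y_1^2=1$, $|x_1-1|\leq 1/25$, $|y_1|\leq 7/25$; (ii) $x_2^2+y_2^2=1$, $|x_2+1|\leq 1/25$, $|y_2|\leq 7/25$; (iii) $|x_3|\leq 7/25$, $|y_3-1|\leq 1/25$; (iv) the triangle $A_1B_1C_1$ contains $O=(0,0)$ in its interior or on its edges. Then $$\delta(A_1,B_1)+\delta(B_1,C_1)+\delta(C_1,A_1)+\delta(A_1,D_1)+\delta(B_1,D_1)+\delta(C_1,D_1)\leq 4+4\sqrt{2},$$ and equality holds if and only if $B_1=(1,0)$, $C_1=(-1,0)$, $D_1=(0,1)$. *)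

From Stdlib Require Export Reals.
Open Scope R_scope.

(* delta(P,Q) = sqrt(2 - 2 x x' - 2 y y'); the paper uses it only when
   x x' + y y' <= 1 (Stdlib's sqrt is total, returning 0 on negatives). *)
Definition delta (P Q : R * R) : R :=
  sqrt (2 - 2 * fst P * fst Q - 2 * snd P * snd Q).

Definition origin_in_triangle (A B C : R * R) : Prop :=
  exists a b c : R, 0 <= a /\ 0 <= b /\ 0 <= c /\ a + b + c = 1 /\
    a * fst A + b * fst B + c * fst C = 0 /\
    a * snd A + b * snd B + c * snd C = 0.

(* The chords AB, CA, BD, CD are nearly
   orthogonal, where [sqrt (2 - 2 c) <= sqrt 2 (1 - c/2 - 2 c^2/25)], while BC and
   AD are nearly antipodal, where [sqrt (4 - d) <= 2 - d/4].  Summing, the linear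
   terms of the orthogonal chords collapse to [(y1 + y2)(1 - y3) - (x1 + x2) x3],
   and [|x1 + x2| <= 25/48 (y1^2 + y2^2)] since B and C lie on the unit circle near
   (1,0) and (-1,0).  So the quadratic corrections and the term [(1 - y3)/2] coming
   from AD win: [S + (1 - y3 + y1^2 + y2^2 + (B.D)^2)/1000 <= 4 + 4 sqrt 2], which
   gives the bound and forces B = (1,0), C = (-1,0), D = (0,1) at equality. *)

From Stdlib Require Import Reals Lra.
Open Scope R_scope.

Lemma Rabs_le_inv x a : Rabs x <= a -> -a <= x <= a.
Proof. unfold Rabs; destruct (Rcase_abs x); lra. Qed.

Lemma sqrt_le_of_le_sq a b : 0 <= b -> a <= b * b -> sqrt a <= b.
Proof.
  intros Hb Hab; rewrite <- (sqrt_square b Hb); apply sqrt_le_1_alt; exact Hab.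
Qed.

Lemma sqrt2_bounds : 1414 / 1000 <= sqrt 2 <= 1415 / 1000.
Proof.
  pose proof (sqrt_sqrt 2 ltac:(lra)); pose proof (sqrt_pos 2); split; nra.
Qed.

Lemma sqrt_four_sub_le d : 0 <= d <= 4 -> sqrt (4 - d) <= 2 - d / 4.
Proof. intros Hd; apply sqrt_le_of_le_sq; nra. Qed.

(* The correction term [k c^2] is admissible since
   [2 (1 - c/2 - k c^2)^2 - (2 - 2 c) = 2 c^2 (1/4 - 2 k + k c + (k c)^2)]. *)
Lemma sqrt_two_sub_le k c :
  0 <= 1 - c / 2 - k * c ^ 2 -> - (k * c) - (k * c) ^ 2 <= 1 / 4 - 2 * k ->
  sqrt (2 - 2 * c) <= sqrt 2 * (1 - c / 2 - k * c ^ 2).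
Proof.
  intros Hpos Hk; apply sqrt_le_of_le_sq.
  - pose proof (sqrt_pos 2); nra.
  - pose proof (sqrt_sqrt 2 ltac:(lra)) as H2.
    replace (sqrt 2 * (1 - c / 2 - k * c ^ 2) * (sqrt 2 * (1 - c / 2 - k * c ^ 2)))
      with (sqrt 2 * sqrt 2 * (1 - c / 2 - k * c ^ 2) ^ 2) by ring.
    rewrite H2.
    assert (0 <= c ^ 2 * (1 / 4 - 2 * k + k * c + (k * c) ^ 2)) by nra.
    nra.
Qed.

(* On the unit circle, [(x1 + x2) (x1 - x2) = y2^2 - y1^2]. *)
Lemma Rabs_add_le_of_unit g x1 y1 x2 y2 :
  x1 ^ 2 + y1 ^ 2 = 1 -> x2 ^ 2 + y2 ^ 2 = 1 -> 0 < g <= x1 - x2 ->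
  Rabs (x1 + x2) * g <= y1 ^ 2 + y2 ^ 2.
Proof.
  intros H1 H2 Hg; apply (Rle_trans _ (Rabs (x1 + x2) * (x1 - x2))).
  - apply Rmult_le_compat_l; [apply Rabs_pos | lra].
  - rewrite <- (Rabs_pos_eq (x1 - x2)) by lra; rewrite <- Rabs_mult.
    apply Rabs_le.
    assert (Hdiff : (x1 + x2) * (x1 - x2) = y2 ^ 2 - y1 ^ 2) by nra.
    pose proof (pow2_ge_0 y1); pose proof (pow2_ge_0 y2).
    split; nra.
Qed.

Definition dot (P Q : R * R) : R := fst P * fst Q + snd P * snd Q.

Lemma delta_dot P Q : delta P Q = sqrt (2 - 2 * dot P Q).
Proof. unfold delta, dot; f_equal; ring. Qed.

Lemma dot_unit_bounds P Q :
  fst P ^ 2 + snd P ^ 2 = 1 -> fst Q ^ 2 + snd Q ^ 2 = 1 -> -1 <= dot P Q <= 1.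
Proof.
  unfold dot; intros HP HQ.
  pose proof (pow2_ge_0 (fst P + fst Q)); pose proof (pow2_ge_0 (snd P + snd Q)).
  pose proof (pow2_ge_0 (fst P - fst Q)); pose proof (pow2_ge_0 (snd P - snd Q)).
  split; nra.
Qed.

Lemma delta_of_dot_0 P Q : dot P Q = 0 -> delta P Q = sqrt 2.
Proof. intros H; rewrite delta_dot, H; f_equal; ring. Qed.

Lemma delta_of_dot_m1 P Q : dot P Q = -1 -> delta P Q = 2.
Proof.
  intros H; rewrite delta_dot, H; apply sqrt_lem_1; lra.
Qed.

Lemma delta_le_near_orthogonal P Q :
  -(14 / 25) <= dot P Q <= 14 / 25 ->
  delta P Q <= sqrt 2 * (1 - dot P Q / 2 - 2 / 25 * dot P Q ^ 2).
Proof. intros Hc; rewrite delta_dot; apply sqrt_two_sub_le; nra. Qed.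

Lemma delta_le_of_dot_bounds P Q :
  -1 <= dot P Q <= 1 -> delta P Q <= 2 - (1 + dot P Q) / 2.
Proof.
  intros Hc; rewrite delta_dot.
  replace (2 - 2 * dot P Q) with (4 - (2 + 2 * dot P Q)) by ring.
  replace (2 - (1 + dot P Q) / 2) with (2 - (2 + 2 * dot P Q) / 4) by field.
  apply sqrt_four_sub_le; lra.
Qed.

Section NearSquare.

Variables x1 y1 x2 y2 x3 y3 : R.
Hypothesis hB : x1 ^ 2 + y1 ^ 2 = 1.
Hypothesis hC : x2 ^ 2 + y2 ^ 2 = 1.
Hypothesis hx1 : 24 / 25 <= x1.
Hypothesis hx2 : x2 <= - (24 / 25).
Hypothesis hy1 : -(7 / 25) <= y1 <= 7 / 25.
Hypothesis hy2 : -(7 / 25) <= y2 <= 7 / 25.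
Hypothesis hx3 : -(7 / 25) <= x3 <= 7 / 25.
Hypothesis hy3 : 24 / 25 <= y3 <= 1.

Lemma dot_D_bounds x y :
  x ^ 2 + y ^ 2 = 1 -> -(7 / 25) <= y <= 7 / 25 ->
  -(14 / 25) <= dot (x, y) (x3, y3) <= 14 / 25.
Proof.
  unfold dot; simpl; intros Hu Hy.
  assert (-1 <= x <= 1) by (pose proof (pow2_ge_0 y); split; nra).
  split; nra.
Qed.

Lemma linear_part_le :
  y1 + y2 - dot (x1, y1) (x3, y3) - dot (x2, y2) (x3, y3)
  <= 14 / 25 * (1 - y3) + 7 / 48 * (y1 ^ 2 + y2 ^ 2).
Proof.
  unfold dot; simpl.
  (* The left-hand side is [(y1 + y2) (1 - y3) - (x1 + x2) x3]. *)
  pose proof (Rabs_add_le_of_unit (48 / 25) x1 y1 x2 y2 hB hC ltac:(lra)) as Hs.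
  pose proof (Rle_abs (- ((x1 + x2) * x3))) as Hx.
  rewrite Rabs_Ropp, Rabs_mult in Hx.
  assert (Rabs x3 <= 7 / 25) by (apply Rabs_le; lra).
  pose proof (Rabs_pos (x1 + x2)).
  nra.
Qed.

Lemma sum_delta_le :
  let A := (0, -1) in let B := (x1, y1) in let C := (x2, y2) in let D := (x3, y3) in
  delta A B + delta B C + delta C A + delta A D + delta B D + delta C D
  + (1 - y3 + y1 ^ 2 + y2 ^ 2 + dot B D ^ 2) / 1000 <= 4 + 4 * sqrt 2.
Proof.
  intros A B C D.
  assert (eAB : dot A B = - y1) by (unfold dot; simpl; ring).
  assert (eCA : dot C A = - y2) by (unfold dot; simpl; ring).
  assert (eAD : dot A D = - y3) by (unfold dot; simpl; ring).
  assert (hAB := delta_le_near_orthogonal A B ltac:(rewrite eAB; lra)).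
  assert (hCA := delta_le_near_orthogonal C A ltac:(rewrite eCA; lra)).
  assert (hBD := delta_le_near_orthogonal B D (dot_D_bounds x1 y1 hB hy1)).
  assert (hCD := delta_le_near_orthogonal C D (dot_D_bounds x2 y2 hC hy2)).
  assert (hBC := delta_le_of_dot_bounds B C (dot_unit_bounds B C hB hC)).
  assert (hAD := delta_le_of_dot_bounds A D ltac:(rewrite eAD; lra)).
  pose proof (dot_unit_bounds B C hB hC).
  assert (hlin : y1 + y2 - dot B D - dot C D
                 <= 14 / 25 * (1 - y3) + 7 / 48 * (y1 ^ 2 + y2 ^ 2))
    by exact linear_part_le.
  rewrite eAB in hAB; rewrite eCA in hCA; rewrite eAD in hAD.
  set (cB := dot B D) in *; set (cC := dot C D) in *.
  (* [17 / 2400 = 2 / 25 - 7 / 96]: the quadratic corrections absorb the cross term. *)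
  set (w := 17 / 2400 * (y1 ^ 2 + y2 ^ 2) + 2 / 25 * (cB ^ 2 + cC ^ 2)).
  pose proof (pow2_ge_0 y1); pose proof (pow2_ge_0 y2).
  pose proof (pow2_ge_0 cB); pose proof (pow2_ge_0 cC).
  assert (hw : 0 <= w) by (unfold w; lra).
  destruct sqrt2_bounds as [hs_lo hs_hi].
  assert (hbrackets :
    (1 - - y1 / 2 - 2 / 25 * (- y1) ^ 2) + (1 - - y2 / 2 - 2 / 25 * (- y2) ^ 2)
    + (1 - cB / 2 - 2 / 25 * cB ^ 2) + (1 - cC / 2 - 2 / 25 * cC ^ 2)
    <= 4 + 7 / 25 * (1 - y3) - w) by (unfold w; lra).
  assert (7 / 25 * (1 - y3) * sqrt 2 <= 7 / 25 * (1 - y3) * (1415 / 1000)) by nra.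
  assert (w * (1414 / 1000) <= w * sqrt 2) by nra.
  pose proof (Rmult_le_compat_l (sqrt 2) _ _ ltac:(lra) hbrackets).
  unfold w in *; lra.
Qed.

End NearSquare.

Lemma sum_delta_square :
  let A := (0, -1) in let B := (1, 0) in let C := (-1, 0) in let D := (0, 1) in
  delta A B + delta B C + delta C A + delta A D + delta B D + delta C D = 4 + 4 * sqrt 2.
Proof.
  intros A B C D.
  rewrite (delta_of_dot_0 A B), (delta_of_dot_m1 B C), (delta_of_dot_0 C A),
    (delta_of_dot_m1 A D), (delta_of_dot_0 B D), (delta_of_dot_0 C D)
    by (unfold dot; simpl; ring).
  ring.
Qed.

Theorem theorem3 (x1 y1 x2 y2 x3 y3 : R) :
  -1 <= x1 <= 1 -> -1 <= y1 <= 1 ->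
  -1 <= x2 <= 1 -> -1 <= y2 <= 1 ->
  -1 <= x3 <= 1 -> -1 <= y3 <= 1 ->
  x1 ^ 2 + y1 ^ 2 = 1 -> Rabs (x1 - 1) <= 1 / 25 -> Rabs y1 <= 7 / 25 ->
  x2 ^ 2 + y2 ^ 2 = 1 -> Rabs (x2 + 1) <= 1 / 25 -> Rabs y2 <= 7 / 25 ->
  Rabs x3 <= 7 / 25 -> Rabs (y3 - 1) <= 1 / 25 ->
  origin_in_triangle (0, -1) (x1, y1) (x2, y2) ->
  let A1 := (0, -1) in let B1 := (x1, y1) in
  let C1 := (x2, y2) in let D1 := (x3, y3) in
  let S := delta A1 B1 + delta B1 C1 + delta C1 A1
           + delta A1 D1 + delta B1 D1 + delta C1 D1 in
  S <= 4 + 4 * sqrt 2 /\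
  (S = 4 + 4 * sqrt 2 <->
     (B1 = (1, 0) /\ C1 = (-1, 0) /\ D1 = (0, 1))).
Proof.
  intros _ _ _ _ _ hy3 hB hx1 hy1 hC hx2 hy2 hx3 hy3' _ A1 B1 C1 D1 S.
  apply Rabs_le_inv in hx1, hy1, hx2, hy2, hx3, hy3'.
  assert (hS : S + (1 - y3 + y1 ^ 2 + y2 ^ 2 + dot B1 D1 ^ 2) / 1000 <= 4 + 4 * sqrt 2)
    by exact (sum_delta_le x1 y1 x2 y2 x3 y3 hB hC
                ltac:(lra) ltac:(lra) hy1 hy2 hx3 ltac:(lra)).
  pose proof (pow2_ge_0 y1); pose proof (pow2_ge_0 y2); pose proof (pow2_ge_0 (dot B1 D1)).
  split; [lra | split].
  - intros hEq.
    assert (y1 = 0) by nra; assert (y2 = 0) by nra; assert (y3 = 1) by lra.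
    assert (hBD : dot B1 D1 = 0) by nra.
    assert (x1 = 1) by nra; assert (x2 = -1) by nra.
    assert (x3 = 0) by (unfold dot in hBD; simpl in hBD; subst; lra).
    subst; repeat split.
  - intros [hB1 [hC1 hD1]].
    injection hB1 as -> ->; injection hC1 as -> ->; injection hD1 as -> ->.
    exact sum_delta_square.
Qed.
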